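(* Let $f:(\mathbb{R}^d)^n\to\mathbb{R}$ be a random layered network of the form $f=g\circ F_W$, where $F_W$ is a regular random convolutional layer with $d$ input channels and $g$ is a random layered network independent of $W$. Then $f$ is $\mathbb{SO}(d)$-invariant: for every $U\in\mathbb{SO}(d)$, the random function $Uf$ defined by $(Uf)(\vec{\mathbf{x}})=f(U^{-1}\vec{\mathbf{x}})$ has the same distribution as $f$.
   Context: $\mathbb{SO}(d)$ acts on $(\mathbb{R}^d)^n$ by $U\cdot(\mathbf{x}_1,\ldots,\mathbf{x}_n)=(U\mathbf{x}_1,\ldots,U\mathbf{x}_n)$. A layer is a map $\mathbf{x}\mapsto\sigma(W\mathbf{x})$ ($\sigma:\mathbb{R}\to\mathbb{R}$ applied coordinatewise); a layered network is a composition of layers. A convolutional layer of width $w$, stride $s$ (with $s\mid n-w$), $d_1$ input channels and $d_2\times(d_1w)$ weight matrix $W$ is $F_W(\vec{\mathbf{x}})=\left(\sigma(WT_{0}(\vec{\mathbf{x}})),\ldots,\sigma(WT_{\frac{n-w}{s}}(\vec{\mathbf{x}}))\right)$, where $T_i(\vec{\mathbf{x}})=(\mathbf{x}_{is+1},\ldots,\mathbf{x}_{is+w})\in\mathbb{R}^{d_1w}$. It is a regular random convolutional layer if $W$ is random and for every orthogonal $(d_1w)\times(d_1w)$ matrix $U$, $W$ and $WU$ have the same distribution. *)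

From HB Require Import structures.
From mathcomp Require Import all_boot all_order all_algebra.
From mathcomp Require Import all_classical all_reals all_analysis.
Set Implicit Arguments.
Unset Strict Implicit.
Unset Printing Implicit Defensive.
Import Order.TTheory GRing.Theory Num.Theory.
Local Open Scope classical_set_scope.
Local Open Scope ring_scope.

Section Defs.
Context {R : realType}.

Definition orthogonal_mx n (U : 'M[R]_n) : Prop := U^T *m U = 1%:M.
Definition SO_mx n (U : 'M[R]_n) : Prop := orthogonal_mx U /\ \det U = 1.

Definition pts_act d n (U : 'M[R]_d) (x : n.-tuple 'cV[R]_d)
  : n.-tuple 'cV[R]_d := map_tuple (mulmx U) x.

(** T_i(x) = (x_{is+1}, ..., x_{is+w}) in R^{d w} (concatenation; the
    0-indexed point i*s+j sits in block j). *)
Definition patch d n (w s : nat) (x : n.-tuple 'cV[R]_d) (i : nat)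
  : 'cV[R]_(w * d) :=
  (mxvec (\matrix_(j < w, c < d) (nth 0 (tval x) (i * s + j)) c ord0))^T.

Definition nwin (n w s : nat) : nat := ((n - w) %/ s).+1.

(** Convolutional layer F_W(x) = (σ(W T_0 x), ..., σ(W T_{(n-w)/s} x)),
    output flattened (concatenated) into R^{nwin * d2}. *)
Definition conv_layer d n (w s d2 : nat) (sigma : R -> R)
  (W : 'M[R]_(d2, w * d)) (x : n.-tuple 'cV[R]_d)
  : 'cV[R]_(nwin n w s * d2) :=
  (mxvec (\matrix_(i < nwin n w s, c < d2)
            (map_mx sigma (W *m patch w s x i)) c ord0))^T.

Definition mx_sigma m k : set (set 'M[R]_(m, k)) :=
  <<s \bigcup_(i in [set: 'I_m]) \bigcup_(j in [set: 'I_k])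
        preimage_set_system setT (fun M : 'M[R]_(m, k) => M i j) measurable >>.

Definition fun_sigma (X : Type) : set (set (X -> R)) :=
  <<s \bigcup_(x in [set: X])
        preimage_set_system setT (fun h : X -> R => h x) measurable >>.

Context {dT : measure_display} {T : measurableType dT}.

Definition random_mx m k (W : T -> 'M[R]_(m, k)) : Prop :=
  forall i j, measurable_fun setT (fun w => W w i j).

Definition mx_gen m k (W : T -> 'M[R]_(m, k)) : set (set T) :=
  preimage_set_system setT W (@mx_sigma m k).

(** Random layered networks from R^k to R: a fixed architecture with fixed
    (measurable) activations and random weight matrices.  [rnet k] is a
    composition of layers x |-> sigma (W x); [ROut] reads the single
    coordinate of R^1. *)
Inductive rnet : nat -> Type :=
| ROut : rnet 1
| RLayer (k k' : nat) (sigma : R -> R) (W : T -> 'M[R]_(k', k)) (N : rnet k')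
  : rnet k.

Fixpoint rnet_eval k (N : rnet k) (om : T) : 'cV[R]_k -> R :=
  match N in rnet k0 return 'cV[R]_k0 -> R with
  | ROut => fun y => y ord0 ord0
  | RLayer _ _ sigma W N' => fun y => rnet_eval N' om (map_mx sigma (W om *m y))
  end.

Fixpoint rnet_ok k (N : rnet k) : Prop :=
  match N with
  | ROut => True
  | RLayer _ _ sigma W N' =>
      [/\ measurable_fun setT sigma, random_mx W & rnet_ok N']
  end.

Fixpoint rnet_events k (N : rnet k) : set (set T) :=
  match N with
  | ROut => set0
  | RLayer _ _ _ W N' => mx_gen W `|` rnet_events N'
  end.

Definition rnet_sigma k (N : rnet k) : set (set T) := <<s rnet_events N >>.

Variable P : probability T R.

Definition indep_sigma (F G : set (set T)) : Prop :=
  forall A B, F A -> G B -> P (A `&` B) = (P A * P B)%E.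

Definition same_law (X : Type) (G : set (set X)) (X1 X2 : T -> X) : Prop :=
  forall A, G A -> P (X1 @^-1` A) = P (X2 @^-1` A).

Definition regular_random_mx m k (W : T -> 'M[R]_(m, k)) : Prop :=
  random_mx W /\
  forall U : 'M[R]_k, orthogonal_mx U ->
    same_law (@mx_sigma m k) W (fun om => W om *m U).

End Defs.

From Pilot Require Import Defs.
From HB Require Import structures.
From mathcomp Require Import all_boot all_order all_algebra.
From mathcomp Require Import all_classical all_reals all_analysis.
From mathcomp Require Import measurable_realfun.
Set Implicit Arguments.
Unset Strict Implicit.
Unset Printing Implicit Defensive.
Import Order.TTheory GRing.Theory Num.Theory.
Local Open Scope classical_set_scope.
Local Open Scope ring_scope.

(* Acting by U^-1 on every input point acts on each window T_i(x) of R^(w d) by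
   the block-diagonal orthogonal matrix V = diag(U^-1, ..., U^-1), so
   f(U^-1 x) is the same network with first-layer weights W V instead of W.
   By regularity W V has the law of W; as W and W V are both independent of
   the weights of g, the pairs (weights of g, W) and (weights of g, W V) have
   the same joint law, since the two laws agree on measurable rectangles,
   a pi-system generating the product sigma-algebra.  The network is a
   measurable function of this pair, hence the two random functions have the
   same law. *)

Section law_uniqueness.
Context {R : realType} {dT : measure_display} {T : measurableType dT}.
Variable P : probability T R.

Lemma probability_preimage_unique {dY} {Y : measurableType dY}
    (G : set (set Y)) (X1 X2 : T -> Y) :
  measurable_fun setT X1 -> measurable_fun setT X2 ->
  measurable = <<s G >> -> setI_closed G -> G setT ->
  (forall A, G A -> P (X1 @^-1` A) = P (X2 @^-1` A)) ->
  same_law P measurable X1 X2.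
Proof.
move=> mX1 mX2 mG GI GT X12.
apply: (@measure_unique _ _ Y G (fun=> setT) mG GI (fun=> GT) _
  (pushforward P X1) (pushforward P X2) X12) => // [|k].
- by apply/seteqP; split => // y _; exists 0%N.
- change (P (X1 @^-1` setT) < +oo)%E.
  by rewrite preimage_setT probability_setT ltry.
Qed.

Variable F : set (set T).
Hypothesis F_measurable : F `<=` measurable.
Local Notation TF := (g_sigma_algebraType F).

Lemma measurable_fun_sigma_gen : measurable_fun setT (fun t : T => t : TF).
Proof.
move=> _ A FA; rewrite setTI.
exact: (smallest_sub (@sigma_algebra_measurable _ T)) F_measurable _ FA.
Qed.

Lemma joint_law_eq_indep dY (Y : measurableType dY) (X1 X2 : T -> Y) :
  measurable_fun setT X1 -> measurable_fun setT X2 ->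
  same_law P measurable X1 X2 ->
  indep_sigma P <<s F >> (preimage_set_system setT X1 measurable) ->
  indep_sigma P <<s F >> (preimage_set_system setT X2 measurable) ->
  same_law P measurable (fun t => (t : TF, X1 t)) (fun t => (t : TF, X2 t)).
Proof.
move=> mX1 mX2 X12 indep1 indep2.
apply: (probability_preimage_unique _ _ (measurable_prod_measurableType _ _)).
- exact: measurable_fun_pair measurable_fun_sigma_gen mX1.
- exact: measurable_fun_pair measurable_fun_sigma_gen mX2.
- move=> _ _ [A1 mA1 [B1 mB1 <-]] [A2 mA2 [B2 mB2 <-]]; rewrite -setXI.
  exists (A1 `&` A2); first exact: measurableI.
  by exists (B1 `&` B2) => //; exact: measurableI.
- by exists setT => //; exists setT => //; rewrite setXTT.
move=> _ [A mA [B mB <-]].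
(* on a rectangle both sides factor by independence *)
change (P (A `&` X1 @^-1` B) = P (A `&` X2 @^-1` B)).
rewrite indep1 ?indep2 ?X12 //; exists B => //; exact: setTI.
Qed.

End law_uniqueness.

Section matrix_measurable.
Import numFieldNormedType.Exports.
Context {R : realType}.

(* [mx_sigma m k] is convertible to [<<s mx_entry_events m k >>], so the
   measurable sets of [mx_mtype R m k] below are exactly those of [mx_sigma]. *)
Definition mx_entry_events m k : set (set 'M[R]_(m, k)) :=
  \bigcup_(i in [set: 'I_m]) \bigcup_(j in [set: 'I_k])
    preimage_set_system setT (fun M : 'M[R]_(m, k) => M i j) measurable.
Arguments mx_entry_events : clear implicits.

Local Notation MT m k := (g_sigma_algebraType (mx_entry_events m k)).

Lemma measurable_mx_entry m k i j : measurable_fun setT (fun M : MT m k => M i j).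
Proof.
by move=> _ B mB; apply: sub_sigma_algebra; exists i => //; exists j => //; exists B.
Qed.

Lemma measurable_fun_mx dX (X : measurableType dX) m k (h : X -> MT m k) :
  (forall i j, measurable_fun setT (fun x => h x i j)) -> measurable_fun setT h.
Proof.
move=> hm; apply: (@measurability _ _ _ _ setT h (mx_entry_events m k)) => //.
move=> _ [B [i _ [j _ [C mC <-]]] <-].
by have := hm i j measurableT C mC; rewrite !setTI.
Qed.

Lemma measurable_mulmxr m k l (V : 'M[R]_(k, l)) :
  measurable_fun setT (fun M : MT m k => M *m V : MT m l).
Proof.
apply: measurable_fun_mx => i j; under eq_fun do rewrite mxE.
apply: measurable_sum => r; apply: measurable_funM => //.
exact: measurable_mx_entry.
Qed.

End matrix_measurable.

Notation mx_mtype R m k := (g_sigma_algebraType (@mx_entry_events R m k)).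

Section network_measurable.
Import numFieldNormedType.Exports.
Context {R : realType} {dT : measure_display} {T : measurableType dT}.

Lemma mx_gen_measurable m k (W : T -> 'M[R]_(m, k)) :
  random_mx W -> mx_gen W `<=` measurable.
Proof.
move=> rW _ [B mB <-].
exact: (@measurable_fun_mx R _ T m k W rW) measurableT B mB.
Qed.

Lemma rnet_events_measurable k (N : @rnet R dT T k) :
  rnet_ok N -> rnet_events N `<=` measurable.
Proof.
elim: N => [_ A []|k0 k' sig W N IH] /= [_ rW okN] A [].
- exact: mx_gen_measurable.
- exact: IH.
Qed.

Context {dX : measure_display} {X : measurableType dX} (pi : X -> T).

Lemma measurable_weight_entry m k (W : T -> 'M[R]_(m, k)) :
  (forall A, mx_gen W A -> measurable (pi @^-1` A)) ->
  forall i j, measurable_fun setT (fun p => W (pi p) i j).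
Proof.
move=> piW i j _ B mB; rewrite setTI.
apply: (piW (W @^-1` ((fun M => M i j) @^-1` B))).
exists ((fun M : 'M[R]_(m, k) => M i j) @^-1` B); last by rewrite setTI.
by have := @measurable_mx_entry R m k i j measurableT B mB; rewrite setTI.
Qed.

Lemma rnet_eval_measurable k (N : @rnet R dT T k) (Z : X -> 'cV[R]_k) :
  rnet_ok N -> (forall A, rnet_events N A -> measurable (pi @^-1` A)) ->
  (forall i j, measurable_fun setT (fun p => Z p i j)) ->
  measurable_fun setT (fun p => rnet_eval N (pi p) (Z p)).
Proof.
elim: N Z => [|k0 k' sig W N IH] Z /=; first by move=> _ _; exact.
move=> [msig _ okN] piN mZ; apply: IH => // [A NA|i j].
  by apply: piN; right.
under eq_fun do rewrite !mxE.
apply: measurableT_comp msig _; apply: measurable_sum => l.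
apply: measurable_funM => //; apply: measurable_weight_entry => A WA.
by apply: piN; left.
Qed.

End network_measurable.

Section patch_action.
Context {R : realType}.

Lemma lin_mulmxrE w d (B : 'M[R]_d) a b a' c :
  @lin_mulmxr R w d d B (mxvec_index a b) (mxvec_index a' c)
  = (a == a')%:R * B b c.
Proof.
have := congr1 (fun u : 'rV_(w * d) => u 0 (mxvec_index a' c))
  (mul_rV_lin (mulmxr B) (delta_mx 0 (mxvec_index a b))).
rewrite vec_mx_delta mxvecE -rowE mxE /= => ->.
rewrite mxE (bigD1 b) //= big1 ?addr0 => [|l lb]; rewrite mxE.
  by rewrite eqxx andbT eq_sym.
by rewrite (negbTE lb) andbF mul0r.
Qed.

Lemma trmx_lin_mulmxr w d (B : 'M[R]_d) :
  (@lin_mulmxr R w d d B)^T = lin_mulmxr B^T.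
Proof.
apply/matrixP => k k'.
case/mxvec_indexP: k => a c; case/mxvec_indexP: k' => a' b.
by rewrite mxE !lin_mulmxrE mxE eq_sym.
Qed.

Lemma lin_mulmxr_orthogonal w d (B : 'M[R]_d) :
  orthogonal_mx B -> orthogonal_mx (@lin_mulmxr R w d d B).
Proof.
move=> oB; rewrite /orthogonal_mx trmx_lin_mulmxr; apply/row_matrixP => k.
rewrite row_mul rowE !mul_rV_lin /= mxvecK -mulmxA oB mulmx1 vec_mxK.
by rewrite rowE mulmx1.
Qed.

Lemma orthogonal_mx_invmx d (U : 'M[R]_d) :
  orthogonal_mx U -> orthogonal_mx (invmx U).
Proof.
rewrite /orthogonal_mx => oU.
have U_unit : U \in unitmx by case/mulmx1_unit: oU.
have -> : invmx U = U^T by rewrite -[U^T]mulmx1 -(mulmxV U_unit) mulmxA oU mul1mx.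
by rewrite trmxK mulmx1C.
Qed.

Lemma nth_pts_act d n (B : 'M[R]_d) (x : n.-tuple 'cV[R]_d) k :
  nth 0 (pts_act B x) k = B *m nth 0 x k.
Proof.
have [k_lt|k_ge] := ltnP k (size x); first by rewrite (nth_map 0).
by rewrite !nth_default ?size_map // mulmx0.
Qed.

(* [lin_mulmxr B] is the block-diagonal matrix diag(B, ..., B) acting on the
   concatenation of w points of R^d. *)
Lemma patch_pts_act d n w s (B : 'M[R]_d) (x : n.-tuple 'cV[R]_d) i :
  Defs.patch w s (pts_act B x) i = lin_mulmxr B *m Defs.patch w s x i.
Proof.
rewrite /Defs.patch -[lin_mulmxr B]trmxK trmx_lin_mulmxr -trmx_mul.
rewrite /lin_mulmxr mul_vec_lin; congr (mxvec _)^T.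
apply/matrixP => j c; rewrite !mxE nth_pts_act mxE.
by apply: eq_bigr => l _; rewrite !mxE mulrC.
Qed.

Lemma conv_layer_pts_act d n w s d2 (sigma : R -> R) (M : 'M[R]_(d2, w * d))
    (B : 'M[R]_d) (x : n.-tuple 'cV[R]_d) :
  conv_layer s sigma M (pts_act B x) = conv_layer s sigma (M *m lin_mulmxr B) x.
Proof.
rewrite /conv_layer; congr (mxvec _)^T; apply/matrixP => i c.
by rewrite mxE [in RHS]mxE patch_pts_act mulmxA.
Qed.

End patch_action.

Section fun_sigma_measurable.
Context {R : realType}.

Lemma preimage_fun_sigma_measurable dX (X : measurableType dX) (Y : Type)
    (h : X -> Y -> R) :
  (forall y, measurable_fun setT (h ^~ y)) ->
  forall A, fun_sigma A -> measurable (h @^-1` A).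
Proof.
move=> mh A FA.
suff: @fun_sigma R Y `<=` image_set_system setT h measurable.
  by move/(_ A FA); rewrite /image_set_system /= setTI.
apply: smallest_sub; first exact/sigma_algebra_image/sigma_algebra_measurable.
move=> _ [y _ [B mB <-]].
by have := mh y measurableT B mB; rewrite /image_set_system /= !setTI.
Qed.

End fun_sigma_measurable.

Section conv_network.
Import numFieldNormedType.Exports.
Context {R : realType} {dT : measure_display} {T : measurableType dT}.
Variables (d n w s d2 : nat) (sigma : R -> R) (g : @rnet R dT T (nwin n w s * d2)).
Hypotheses (msig : measurable_fun setT sigma) (okg : rnet_ok g).

Local Notation MT := (mx_mtype R d2 (w * d)).
Local Notation TG := (g_sigma_algebraType (rnet_events g)).

Definition conv_net (om : T) (M : 'M[R]_(d2, w * d)) (x : n.-tuple 'cV[R]_d) : R :=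
  rnet_eval g om (conv_layer s sigma M x).

Lemma measurable_conv_layer_entry (x : n.-tuple 'cV[R]_d) i j :
  measurable_fun setT (fun M : MT => conv_layer s sigma M x i j).
Proof.
rewrite (ord1 j) /conv_layer; case/mxvec_indexP: i => a c.
under eq_fun do rewrite mxE mxvecE !mxE.
apply: measurableT_comp msig _; apply: measurable_sum => l.
by apply: measurable_funM => //; exact: measurable_mx_entry.
Qed.

Lemma measurable_conv_net A :
  fun_sigma A -> measurable ((fun p : TG * MT => conv_net p.1 p.2) @^-1` A).
Proof.
apply: preimage_fun_sigma_measurable => x.
pose pi (p : TG * MT) : T := p.1.
apply: (rnet_eval_measurable (pi := pi) (Z := fun p => conv_layer s sigma p.2 x))
  => // [B gB|i j].
  rewrite -setXT; apply: measurableX => //; exact: sub_sigma_algebra.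
apply: (measurableT_comp (f := fun M : MT => conv_layer s sigma M x i j)).
  exact: measurable_conv_layer_entry.
exact: measurable_snd.
Qed.

Variable P : probability T R.

Lemma conv_net_law_mulmxr (W : T -> 'M[R]_(d2, w * d)) (V : 'M[R]_(w * d)) :
  regular_random_mx P W -> indep_sigma P (rnet_sigma g) (mx_gen W) ->
  orthogonal_mx V ->
  same_law P (@fun_sigma R (n.-tuple 'cV[R]_d))
    (fun om => conv_net om (W om)) (fun om => conv_net om (W om *m V)).
Proof.
move=> [rW W_regular] indep oV A FA.
have mW : measurable_fun setT (W : T -> MT) by exact: measurable_fun_mx.
have mWV := measurableT_comp (measurable_mulmxr (m := d2) V) mW.
have indepWV : indep_sigma P (rnet_sigma g)
    (preimage_set_system setT (fun om => W om *m V : MT) measurable).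
  move=> B _ gB [C mC <-]; apply: indep => //.
  exists ((fun M => M *m V) @^-1` C); last by rewrite !setTI.
  by have := measurable_mulmxr (m := d2) V measurableT mC; rewrite setTI.
have joint := joint_law_eq_indep (rnet_events_measurable okg) mW mWV
  (W_regular V oV) indep indepWV.
exact: joint _ (measurable_conv_net FA).
Qed.

End conv_network.

Theorem lemma2 (R : realType) (dT : measure_display) (T : measurableType dT)
  (P : probability T R) (d n w s d2 : nat) (sigma : R -> R)
  (W : T -> 'M[R]_(d2, w * d)) (g : @rnet R dT T (nwin n w s * d2)) :
  (0 < s)%N -> (w <= n)%N -> (s %| n - w)%N ->
  measurable_fun setT sigma ->
  regular_random_mx P W ->
  rnet_ok g ->
  indep_sigma P (rnet_sigma g) (mx_gen W) ->
  let f : T -> n.-tuple 'cV[R]_d -> R :=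
    fun om x => rnet_eval g om (@conv_layer R d n w s d2 sigma (W om) x) in
  forall U : 'M[R]_d, SO_mx U ->
    same_law P (@fun_sigma R (n.-tuple 'cV[R]_d)) f
      (fun om x => f om (pts_act (invmx U) x)).
Proof.
move=> _ _ _ msig W_regular okg indep f U [oU _].
pose V := @lin_mulmxr R w d d (invmx U).
have -> : (fun om x => f om (pts_act (invmx U) x)) =
    (fun om => conv_net sigma g om (W om *m V)).
  by apply/funext => om; apply/funext => x; rewrite /f conv_layer_pts_act.
apply: conv_net_law_mulmxr => //.
exact/lin_mulmxr_orthogonal/orthogonal_mx_invmx.
Qed.
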